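(* Let $\Phi\in\Gamma_0(\mathbb{E})$ be Legendre and let $C\subset \operatorname{int}(\operatorname{dom}\Phi)$ be compact. Then there exist $r>0$ and $\delta<\infty$ such that $$D_\Phi(x,y)\ \ge\ r\|x\|-\delta\qquad\text{for every } x\in\operatorname{dom}\Phi \text{ and every } y\in C.$$
   Context: $\mathbb{E}$ is a finite-dimensional Euclidean space with inner product $\langle\cdot,\cdot\rangle$ and norm $\|\cdot\|$; $\Gamma_0(\mathbb{E})$ is the set of proper, lower semicontinuous, convex functions $\mathbb{E}\to\mathbb{R}\cup\{+\infty\}$. A function $\Phi\in\Gamma_0(\mathbb{E})$ is Legendre if it is essentially smooth ($\operatorname{int}\operatorname{dom}\Phi\neq\emptyset$, $\Phi$ is differentiable on $\operatorname{int}\operatorname{dom}\Phi$, and $\|\nabla\Phi(z^\nu)\|\to\infty$ whenever $\operatorname{int}\operatorname{dom}\Phi\ni z^\nu\to z\in\operatorname{bdry}\operatorname{dom}\Phi$) and essentially strictly convex ($\Phi$ is strictly convex on every convex subset of $\operatorname{dom}\partial\Phi$). The Bregman distance generated by a Legendre $\Phi$ is $D_\Phi(z_1,z_2)=\Phi(z_1)-\Phi(z_2)-\langle\nabla\Phi(z_2),z_1-z_2\rangle$ if $z_1\in\operatorname{dom}\Phi$ and $z_2\in\operatorname{int}\operatorname{dom}\Phi$, and $D_\Phi(z_1,z_2)=+\infty$ otherwise. *)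

From HB Require Import structures.
From mathcomp Require Import all_boot all_order all_algebra.
From mathcomp Require Import all_classical all_reals all_analysis.
Set Implicit Arguments. Unset Strict Implicit. Unset Printing Implicit Defensive.
Import Order.TTheory GRing.Theory Num.Theory.
Import numFieldNormedType.Exports.
Local Open Scope classical_set_scope.
Local Open Scope ring_scope.

(* The Euclidean space E is modelled as 'rV[R]_n (R : realType) with the
   standard inner product; its topology (product topology) coincides with the
   Euclidean one. Functions E -> R u {+oo} are modelled as E -> \bar R. *)

Definition inner (R : realType) (n : nat) (u v : 'rV[R]_n) : R :=
  \sum_(i < n) u 0 i * v 0 i.

Definition enorm (R : realType) (n : nat) (u : 'rV[R]_n) : R :=
  Num.sqrt (inner u u).

Definition edom (R : realType) (n : nat) (Phi : 'rV[R]_n -> \bar R) :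
  set 'rV[R]_n := [set x | (Phi x < +oo)%E].

Definition proper_fun (R : realType) (n : nat) (Phi : 'rV[R]_n -> \bar R) :=
  (forall x, Phi x != -oo%E) /\ (exists x, Phi x \is a fin_num).

Definition lsc_fun (R : realType) (n : nat) (Phi : 'rV[R]_n -> \bar R) :=
  forall (x : 'rV[R]_n) (a : R), (a%:E < Phi x)%E ->
    \forall y \near x, (a%:E < Phi y)%E.

Definition convex_fun (R : realType) (n : nat) (Phi : 'rV[R]_n -> \bar R) :=
  forall (x y : 'rV[R]_n) (t : R), 0 < t < 1 ->
    (Phi (t *: x + (1 - t) *: y)%R <= t%:E * Phi x + (1 - t)%:E * Phi y)%E.

Definition Gamma0 (R : realType) (n : nat) (Phi : 'rV[R]_n -> \bar R) :=
  [/\ proper_fun Phi, lsc_fun Phi & convex_fun Phi].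

(* real-valued version (meaningful on dom Phi) *)
Definition rfun (R : realType) (n : nat) (Phi : 'rV[R]_n -> \bar R) :
  'rV[R]_n -> R := fun x => fine (Phi x).

Definition grad (R : realType) (n : nat) (Phi : 'rV[R]_n -> \bar R)
  (z : 'rV[R]_n) : 'rV[R]_n :=
  \row_(i < n) ('D_(delta_mx 0 i) (rfun Phi) z).

Definition bdry (R : realType) (n : nat) (S : set 'rV[R]_n) : set 'rV[R]_n :=
  closure S `\` interior S.

Definition essentially_smooth (R : realType) (n : nat)
  (Phi : 'rV[R]_n -> \bar R) :=
  [/\ interior (edom Phi) !=set0,
      (forall z, interior (edom Phi) z -> differentiable (rfun Phi) z) &
      (forall (zs : nat -> 'rV[R]_n) (z : 'rV[R]_n),
         (forall k, interior (edom Phi) (zs k)) ->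
         zs @ \oo --> z -> bdry (edom Phi) z ->
         (fun k => enorm (grad Phi (zs k))) @ \oo --> +oo)].

Definition dom_subdiff (R : realType) (n : nat) (Phi : 'rV[R]_n -> \bar R) :
  set 'rV[R]_n :=
  [set x | Phi x \is a fin_num /\
     exists g : 'rV[R]_n, forall y,
       ((fine (Phi x) + inner g (y - x))%:E <= Phi y)%E].

Definition convex_subset (R : realType) (n : nat) (S : set 'rV[R]_n) :=
  forall x y (t : R), S x -> S y -> 0 <= t <= 1 -> S (t *: x + (1 - t) *: y).

Definition strictly_convex_on (R : realType) (n : nat)
  (Phi : 'rV[R]_n -> \bar R) (S : set 'rV[R]_n) :=
  forall x y (t : R), S x -> S y -> x != y -> 0 < t < 1 ->
    (Phi (t *: x + (1 - t) *: y)%R < t%:E * Phi x + (1 - t)%:E * Phi y)%E.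

Definition essentially_strictly_convex (R : realType) (n : nat)
  (Phi : 'rV[R]_n -> \bar R) :=
  forall S, convex_subset S -> S `<=` dom_subdiff Phi -> strictly_convex_on Phi S.

Definition Legendre (R : realType) (n : nat) (Phi : 'rV[R]_n -> \bar R) :=
  [/\ Gamma0 Phi, essentially_smooth Phi & essentially_strictly_convex Phi].

Definition bregman (R : realType) (n : nat) (Phi : 'rV[R]_n -> \bar R)
  (x y : 'rV[R]_n) : \bar R :=
  if `[< edom Phi x /\ interior (edom Phi) y >] then
    (rfun Phi x - rfun Phi y - inner (grad Phi y) (x - y))%:E
  else +oo%E.

From HB Require Import structures.
From mathcomp Require Import all_boot all_order all_algebra.
From mathcomp Require Import all_classical all_reals all_analysis.
From mathcomp Require Import ring lra.
Import Order.TTheory GRing.Theory Num.Theory.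
Import numFieldNormedType.Exports.
Local Open Scope classical_set_scope.
Local Open Scope ring_scope.

(* Choose e > 0 such that the closed e-thickening of C stays in int dom Phi.
   Essential strict convexity makes the second differences
   Phi(y + e u) - 2 Phi(y + e u / 2) + Phi(y), for y in C and |u| = 1,
   positive; they are continuous on the compact set C x sphere, hence bounded
   below by some m > 0.  Convexity along the segment from y to x turns this
   curvature into linear growth: D_Phi(x, y) >= m |x - y| / e as soon as
   |x - y| > e, while D_Phi(x, y) >= 0 always. *)

Set Implicit Arguments.
Unset Strict Implicit.
Unset Printing Implicit Defensive.

Lemma compact_thickening (R : realType) (V : normedModType R) (C U : set V) :
  compact C -> open U -> C `<=` U ->
  exists2 e : R, 0 < e & forall y w, C y -> `|w| <= e -> U (y + w).
Proof.
move=> cC oU CU.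
have near_cover := (compact_near_coveringP C).1 cC.
have : \forall e \near (0 : R)^'+,
    C `<=` (fun y => forall w, `|w| <= e -> U (y + w)).
  apply: near_cover => x Cx.
  have /nbhs_ballP[_ /posnumP[d] dU] : nbhs x U.
    by apply: open_nbhs_nbhs; split; [exact: oU | exact: CU].
  near=> x' i => w wi; apply: dU.
  have xx' : `|x - x'| < d%:num / 2.
    by near: x'; apply/nbhs_ballP; exists (d%:num / 2) => //= z; rewrite -ball_normE.
  have id2 : i < d%:num / 2 by near: i; exact: nbhs_right_lt.
  rewrite -ball_normE /= opprD addrA.
  by apply: le_lt_trans (ler_normB _ _) _; move: wi => /= wi; lra.
move=> near_e; have [e [He e0]] := filter_ex (filterI near_e (nbhs_right_gt 0)).
by exists e => // y w /He; apply.
Unshelve. all: by end_near.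
Qed.

Definition second_difference (R : realType) (n : nat)
  (Phi : 'rV[R]_n -> \bar R) (e : R) (y u : 'rV[R]_n) : R :=
  rfun Phi (y + e *: u) - 2 * rfun Phi (y + (e / 2) *: u) + rfun Phi y.

Lemma second_differenceZ (R : realType) (n : nat) (Phi : 'rV[R]_n -> \bar R)
  e c y u : second_difference Phi e y (c *: u) = second_difference Phi (e * c) y u.
Proof. by rewrite /second_difference !scalerA mulrAC. Qed.

Lemma convex_combE (K : nzRingType) (V : lmodType K) (x y : V) t :
  t *: x + (1 - t) *: y = y + t *: (x - y).
Proof. by rewrite scalerBr scalerBl scale1r addrCA addrC. Qed.

Lemma grad_innerE (R : realType) (n : nat) (Phi : 'rV[R]_n -> \bar R) y v :
  differentiable (rfun Phi) y -> inner (grad Phi y) v = 'D_v (rfun Phi) y.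
Proof.
move=> dy; rewrite deriveE // [in RHS](row_sum_delta v) linear_sum.
by apply: eq_bigr => i _; rewrite linearZ mxE deriveE // mulrC.
Qed.

Section convex_function.
Variables (R : realType) (n : nat) (Phi : 'rV[R]_n -> \bar R).
Hypotheses (Phi_proper : proper_fun Phi) (Phi_convex : convex_fun Phi).

Lemma edom_fineK x : edom Phi x -> Phi x = (rfun Phi x)%:E.
Proof.
by move=> hx; rewrite /rfun fineK // fin_numE Phi_proper.1 /= lt_eqF.
Qed.

Lemma convex_rfun x y t : edom Phi x -> edom Phi y -> 0 < t < 1 ->
  edom Phi (y + t *: (x - y)) /\
  rfun Phi (y + t *: (x - y)) <= t * rfun Phi x + (1 - t) * rfun Phi y.
Proof.
move=> hx hy t01; have := @Phi_convex x y t t01.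
rewrite convex_combE (edom_fineK hx) (edom_fineK hy) -!EFinM -EFinD => le_z.
have hz : edom Phi (y + t *: (x - y)) by apply: le_lt_trans le_z (ltry _).
by move: le_z; rewrite (edom_fineK hz) lee_fin.
Qed.

Lemma derive_le_slope y v s : derivable (rfun Phi) y v ->
  edom Phi y -> edom Phi (y + s *: v) -> 0 < s ->
  'D_v (rfun Phi) y <= (rfun Phi (y + s *: v) - rfun Phi y) / s.
Proof.
move=> dv hy hs s0.
apply: (cvgr_to_le (cvg_dnbhs_at_right dv)); near=> h.
have h0 : 0 < h by near: h; exact: nbhs_right_gt.
have hs' : h < s by near: h; exact: nbhs_right_lt.
have hs01 : 0 < h / s < 1 by rewrite divr_gt0 //= ltr_pdivrMr // mul1r.
have [_] := convex_rfun hs hy hs01.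
rewrite addrAC subrr add0r scalerA mulfVK ?gt_eqF // => le_h.
rewrite /= /shift [h *: v + y]addrC [_ *: _]mulrC ler_pdivrMr //.
have -> : (rfun Phi (y + s *: v) - rfun Phi y) / s * h =
  h / s * rfun Phi (y + s *: v) + (1 - h / s) * rfun Phi y - rfun Phi y by ring.
by rewrite lerD2r.
Unshelve. all: by end_near.
Qed.

Lemma derive_le_diff x y : derivable (rfun Phi) y (x - y) ->
  edom Phi x -> edom Phi y ->
  'D_(x - y) (rfun Phi) y <= rfun Phi x - rfun Phi y.
Proof.
move=> dv hx hy; have := derive_le_slope dv hy _ ltr01.
by rewrite scale1r divr1 addrC subrK; apply.
Qed.

Lemma second_difference_le x y t : derivable (rfun Phi) y (x - y) ->
  edom Phi x -> edom Phi y -> 0 < t < 1 ->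
  second_difference Phi t y (x - y) <=
  t * (rfun Phi x - rfun Phi y - 'D_(x - y) (rfun Phi) y).
Proof.
move=> dv hx hy t01; have [_ le_z] := convex_rfun hx hy t01.
have t20 : 0 < t / 2 by move: t01 => /andP[]; lra.
have t21 : 0 < t / 2 < 1 by rewrite t20 /=; move: t01 => /andP[]; lra.
have [hw _] := convex_rfun hx hy t21.
have := derive_le_slope dv hy hw t20.
rewrite ler_pdivlMr // /second_difference.
move: le_z; set D := 'D_(x - y) _ _; lra.
Qed.

Lemma interior_dom_subdiff y : interior (edom Phi) y ->
  differentiable (rfun Phi) y -> dom_subdiff Phi y.
Proof.
move=> yU dy; have hy := interior_subset yU.
split; first by rewrite (edom_fineK hy).
exists (grad Phi y) => z; have [hz|hz] := pselect (edom Phi z); last first.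
  have -> : Phi z = +oo%E by apply/eqP; rewrite eq_le leey /= leNgt; apply/negP.
  exact: leey.
rewrite (edom_fineK hz) lee_fin grad_innerE //.
have dv : derivable (rfun Phi) y (z - y) by exact: diff_derivable.
by have := derive_le_diff dv hz hy; rewrite /rfun; lra.
Qed.

Lemma rfun_bregman_ge x y e m : derivable (rfun Phi) y (x - y) ->
  edom Phi x -> edom Phi y -> 0 < e -> 0 <= m ->
  (forall u, `|u| = 1 -> m <= second_difference Phi e y u) ->
  m / e * (`|x - y| - e) <= rfun Phi x - rfun Phi y - 'D_(x - y) (rfun Phi) y.
Proof.
move=> dv hx hy e0 m0 m_le; have D_le := derive_le_diff dv hx hy.
set d := `|x - y|; have [de|ed] := leP d e.
  apply: (@le_trans _ _ 0); last lra.
  by apply: mulr_ge0_le0; [exact: divr_ge0 m0 (ltW e0) | lra].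
have d0 : 0 < d by lra.
have t0 : 0 < e / d by rewrite divr_gt0.
have t01 : 0 < e / d < 1 by rewrite t0 ltr_pdivrMr // mul1r.
have u1 : `|d^-1 *: (x - y)| = 1.
  by rewrite normrZ ger0_norm ?invr_ge0 ?mulVf ?gt_eqF // ltW.
(* Compare with the second difference along the unit vector (x - y) / d. *)
have := m_le _ u1; rewrite second_differenceZ => /le_trans.
move=> /(_ _ (second_difference_le dv hx hy t01)).
rewrite -(ler_pM2l t0); apply: le_trans.
have -> : e / d * (m / e * (d - e)) = m - m * (e / d).
  by field; rewrite !gt_eqF.
by rewrite gerBl mulr_ge0 // ltW.
Qed.

End convex_function.

Lemma bregmanE (R : realType) (n : nat) (Phi : 'rV[R]_n -> \bar R) x y :
  edom Phi x -> interior (edom Phi) y -> differentiable (rfun Phi) y ->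
  bregman Phi x y = (rfun Phi x - rfun Phi y - 'D_(x - y) (rfun Phi) y)%:E.
Proof. by move=> hx yU dy; rewrite /bregman asboolT ?grad_innerE. Qed.

Lemma dom_subdiff_fineK (R : realType) (n : nat) (Phi : 'rV[R]_n -> \bar R) z :
  dom_subdiff Phi z -> Phi z = (rfun Phi z)%:E.
Proof. by case=> /fineK. Qed.

Lemma second_difference_gt0 (R : realType) (n : nat) (Phi : 'rV[R]_n -> \bar R)
  e y u : essentially_strictly_convex Phi -> 0 < e -> u != 0 ->
  (forall s, 0 <= s <= 1 -> dom_subdiff Phi (y + (s * e) *: u)) ->
  0 < second_difference Phi e y u.
Proof.
move=> sP e0 u0 segD.
pose S := [set z | exists2 s : R, 0 <= s <= 1 & z = y + (s * e) *: u].
have cS : convex_subset S.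
  move=> x1 x2 t [s1 hs1 ->] [s2 hs2 ->] ht.
  exists (t * s1 + (1 - t) * s2); first by apply/andP; split; nra.
  rewrite !scalerDr !scalerA addrACA -!scalerDl.
  by congr (_ + _); [rewrite addrC subrK scale1r | congr (_ *: _); ring].
have SD : S `<=` dom_subdiff Phi by move=> z [s hs ->]; exact: segD.
have S1 : S (y + e *: u) by exists 1; [lra | rewrite mul1r].
have S0 : S y by exists 0; [lra | rewrite mul0r scale0r addr0].
have S2 : S (y + (e / 2) *: u) by exists 2^-1; [lra | rewrite mulrC].
have ne : y + e *: u != y.
  by rewrite -subr_eq0 addrAC subrr add0r scaler_eq0 gt_eqF.
have half01 : 0 < (2^-1 : R) < 1 by apply/andP; split; lra.
have := sP S cS SD _ _ _ S1 S0 ne half01.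
rewrite convex_combE addrAC subrr add0r scalerA [2^-1 * e]mulrC.
rewrite (dom_subdiff_fineK (SD _ S1)) (dom_subdiff_fineK (SD _ S0)).
rewrite (dom_subdiff_fineK (SD _ S2)) -!EFinM -EFinD lte_fin /second_difference.
lra.
Qed.

Lemma continuous_shift_scale (R : realType) (V W : normedModType R)
  (f : V -> W) (c : R) (y u : V) : {for y + c *: u, continuous f} ->
  {for (y, u), continuous (fun p : V * V => f (p.1 + c *: p.2))}.
Proof.
move=> cf; apply: (continuous_comp (f := fun p : V * V => p.1 + c *: p.2)) => //.
by apply: cvgD; [exact: cvg_fst | apply: cvgZl_tmp; exact: cvg_snd].
Qed.

Lemma second_difference_continuous (R : realType) (n : nat)
  (Phi : 'rV[R]_n -> \bar R) e y u :
  {for y, continuous (rfun Phi)} -> {for y + (e / 2) *: u, continuous (rfun Phi)} ->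
  {for y + e *: u, continuous (rfun Phi)} ->
  {for (y, u), continuous (fun p => second_difference Phi e p.1 p.2)}.
Proof.
move=> c0 c2 c1.
have c0' : {for y + 0 *: u, continuous (rfun Phi)} by rewrite scale0r addr0.
have -> : (fun p => second_difference Phi e p.1 p.2) =
    (fun p : 'rV[R]_n * 'rV[R]_n => rfun Phi (p.1 + e *: p.2)) -
    (fun p => 2 * rfun Phi (p.1 + (e / 2) *: p.2)) +
    (fun p => rfun Phi (p.1 + 0 *: p.2)).
  by apply: funext => p; rewrite !fctE scale0r addr0.
apply: cvgD; last exact: continuous_shift_scale.
apply: cvgB; first exact: continuous_shift_scale.
by apply: cvgMl_tmp; exact: continuous_shift_scale.
Qed.

Lemma compact_unit_sphere (R : realType) (n : nat) :
  compact [set u : 'rV[R]_n | `|u| = 1].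
Proof.
apply: bounded_closed_compact.
  rewrite /= /bounded_near; near=> M; move=> u /= ->.
  by apply: ltW; near: M; apply: nbhs_pinfty_gt; exact: num_real.
rewrite (_ : [set u | _] = (fun u => `|u|) @^-1` [set x : R | x = 1]) //.
have := proj1 (continuous_closedP (fun u : 'rV[R]_n => `|u|)).
by move=> /(_ (@norm_continuous _ _)); apply; exact: closed_eq.
Unshelve. all: by end_near.
Qed.

Lemma norm_entry_le (R : realType) (n : nat) (x : 'rV[R]_n) i : `|x 0 i| <= `|x|.
Proof.
rewrite [leRHS]/Num.norm /= mx_normrE; apply/bigmax_geP; right => /=.
by exists (0, i).
Qed.

Lemma enorm_le_norm (R : realType) (n : nat) (x : 'rV[R]_n) :
  enorm x <= n.+1%:R * `|x|.
Proof.
rewrite /enorm -[leRHS]ger0_norm ?mulr_ge0 // -sqrtr_sqr ler_sqrt ?sqr_ge0 //.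
apply: (@le_trans _ _ (\sum_(i < n) `|x| ^+ 2)).
  apply: ler_sum => i _; rewrite -expr2 -real_normK ?num_real //.
  by rewrite lerXn2r ?nnegrE // norm_entry_le.
rewrite sumr_const card_ord exprMn -[_ *+ n]mulr_natl ler_wpM2r ?sqr_ge0 //.
by rewrite -natrX ler_nat; apply: leq_trans (leqnSn n) (leq_pmulr _ _).
Qed.

Lemma second_difference_lower_bound (R : realType) (n : nat)
  (Phi : 'rV[R]_n -> \bar R) (C : set 'rV[R]_n) e :
  Legendre Phi -> compact C -> 0 < e ->
  (forall y w, C y -> `|w| <= e -> interior (edom Phi) (y + w)) ->
  exists2 m : R, 0 < m &
    forall y u, C y -> `|u| = 1 -> m <= second_difference Phi e y u.
Proof.
move=> [[pP _ cP] [_ dP _] sP] cC e0 He.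
have segU y u s : C y -> `|u| = 1 -> 0 <= s <= 1 ->
    interior (edom Phi) (y + (s * e) *: u).
  move=> Cy u1 /andP[s0 s1]; apply: He => //.
  by rewrite normrZ u1 mulr1 ger0_norm ?mulr_ge0 ?ler_piMl // ltW.
pose S := [set u : 'rV[R]_n | `|u| = 1].
have [K0|K0] := pselect ((C `*` S) !=set0); last first.
  by exists 1 => // y u Cy u1; exfalso; apply: K0; exists (y, u).
have cont z : interior (edom Phi) z -> {for z, continuous (rfun Phi)}.
  by move=> /dP /differentiable_continuous.
have ch : {within C `*` S, continuous (fun p => second_difference Phi e p.1 p.2)}.
  apply: continuous_in_subspaceT => -[y u] /set_mem [/= Cy u1].
  apply: second_difference_continuous; apply: cont.
  - by have := segU y u 0 Cy u1; rewrite mul0r scale0r addr0; apply; lra.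
  - by have := segU y u 2^-1 Cy u1; rewrite mulrC; apply; lra.
  - by have := segU y u 1 Cy u1; rewrite mul1r; apply; lra.
have cK : compact (C `*` S) by apply: compact_setX => //; exact: compact_unit_sphere.
have [[y u] /set_mem [/= Cy u1] min_yu] := compact_EVT_min K0 cK ch.
exists (second_difference Phi e y u) => [|y' u' Cy' u1']; last first.
  by apply: (min_yu (y', u')); apply/mem_set.
apply: second_difference_gt0 => //; first by rewrite -normr_eq0 u1 oner_neq0.
move=> s s01; have yU := segU y u s Cy u1 s01.
by apply: interior_dom_subdiff => //; exact: dP.
Qed.

Theorem mainTheorem1 (R : realType) (n : nat) (Phi : 'rV[R]_n -> \bar R)
  (C : set 'rV[R]_n) :
  Legendre Phi -> compact C -> C `<=` interior (edom Phi) ->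
  exists r delta : R, 0 < r /\
    forall x y, edom Phi x -> C y ->
      ((r * enorm x - delta)%:E <= bregman Phi x y)%E.
Proof.
move=> L cC CU; have [[pP _ cP] [_ dP _] _] := L.
have [e e0 He] := compact_thickening cC (@open_interior _ _) CU.
have [m m0 m_le] := second_difference_lower_bound L cC e0 He.
have [B HB] : exists B : R, forall y, C y -> `|y| <= B.
  have := compact_bounded cC; rewrite /= /bounded_near => /filter_ex[B HB].
  by exists B => y /HB.
exists (m / (e * n.+1%:R)), (m / e * (e + B)); split.
  by rewrite divr_gt0 ?mulr_gt0.
move=> x y hx Cy; have yU := CU y Cy.
have dv : derivable (rfun Phi) y (x - y) by exact/diff_derivable/dP.
rewrite bregmanE ?lee_fin //; last exact: dP.
apply: le_trans (rfun_bregman_ge pP cP dv hx (interior_subset yU) e0 (ltW m0)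
  (fun u => m_le y u Cy)).
have me : 0 <= m / e by rewrite divr_ge0 // ltW.
have xB : `|x| <= `|x - y| + B.
  by rewrite -{1}(subrK y x); apply: le_trans (ler_normD _ _) _; rewrite lerD2l HB.
have xE : m / (e * n.+1%:R) * enorm x <= m / e * `|x|.
  rewrite invfM mulrA -mulrA ler_wpM2l // ler_pdivrMl //.
  exact: enorm_le_norm.
by move: xE (ler_wpM2l me xB); set a := m / e; set b := m / (e * _); lra.
Qed.
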